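(* Let $H$ be a complex separable Hilbert space and let $S,T\in B(H)$ be normal operators with Cartesian decompositions $S=A+iC$ and $T=B+iD$ ($A,B,C,D$ self-adjoint) such that $C$ and $D$ are positive. Then $$\|ST-TS\|\le \frac12\sqrt{4\|A\|^2+\|C\|^2}\,\sqrt{4\|B\|^2+\|D\|^2}.$$
   Context: $B(H)$ denotes the algebra of bounded linear operators on $H$ with the operator norm. The Cartesian decomposition of $S\in B(H)$ is $S=A+iC$ with $A=\frac{S+S^*}{2}$ and $C=\frac{S-S^*}{2i}$ self-adjoint. *)

From mathcomp Require Import all_boot all_order all_algebra.
From mathcomp Require Import classical_sets reals.
From mathcomp Require Import complex.
Set Implicit Arguments. Unset Strict Implicit. Unset Printing Implicit Defensive.
Import Order.TTheory GRing.Theory Num.Theory.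
Local Open Scope ring_scope.
Local Open Scope complex_scope.
Local Open Scope classical_set_scope.

Section Hilbert.
Variables (R : realType) (V : lmodType R[i]).

Definition is_inner_product (ip : V -> V -> R[i]) : Prop :=
  [/\ forall (a : R[i]) (x y z : V), ip (a *: x + y) z = a * ip x z + ip y z,
      forall x y : V, ip y x = (ip x y)^*,
      forall x : V, 0 <= ip x x &
      forall x : V, ip x x = 0 -> x = 0].

Definition ipnorm (ip : V -> V -> R[i]) (x : V) : R := Num.sqrt (complex.Re (ip x x)).

Definition ip_complete (ip : V -> V -> R[i]) : Prop :=
  forall u : nat -> V,
    (forall e : R, 0 < e -> exists N, forall m n, (N <= m)%N -> (N <= n)%N ->
        ipnorm ip (u m - u n) < e) ->
    exists l : V, forall e : R, 0 < e -> exists N, forall n, (N <= n)%N ->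
        ipnorm ip (u n - l) < e.

Definition ip_separable (ip : V -> V -> R[i]) : Prop :=
  exists d : nat -> V, forall (x : V) (e : R), 0 < e ->
    exists n, ipnorm ip (x - d n) < e.

Definition separable_hilbert (ip : V -> V -> R[i]) : Prop :=
  [/\ is_inner_product ip, ip_complete ip & ip_separable ip].

Definition bounded_op (ip : V -> V -> R[i]) (T : V -> V) : Prop :=
  (forall (a : R[i]) (x y : V), T (a *: x + y) = a *: T x + T y) /\
  exists M : R, forall x, ipnorm ip (T x) <= M * ipnorm ip x.

Definition is_adjoint (ip : V -> V -> R[i]) (T Ts : V -> V) : Prop :=
  forall x y : V, ip (T x) y = ip x (Ts y).

Definition opnorm (ip : V -> V -> R[i]) (T : V -> V) : R :=
  reals.sup [set ipnorm ip (T x) | x in [set x | ipnorm ip x <= 1]].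

Definition re_part (S Ss : V -> V) : V -> V := fun x => 2^-1 *: (S x + Ss x).
Definition im_part (S Ss : V -> V) : V -> V :=
  fun x => (2 * 'i)^-1 *: (S x - Ss x).

Definition positive_op (ip : V -> V -> R[i]) (C : V -> V) : Prop :=
  forall x : V, 0 <= ip (C x) x.

End Hilbert.

(* Write S = A + iC.  Normality makes A and C commute, so for real r
   ||(S - ir)x||^2 = ||Ax||^2 + ||(C - r)x||^2.  Since 0 <= C <= ||C||, we have
   C^2 <= ||C|| C, hence ||(C - ||C||/2)x|| <= ||C||/2 ||x|| and
   ||S - i||C||/2|| <= sqrt(4||A||^2 + ||C||^2)/2.  The commutator is unchanged
   when S and T are shifted by scalars, and ||PQ - QP|| <= 2||P|| ||Q||. *)

From HB Require Import structures.
From mathcomp Require Import all_boot all_order all_algebra.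
From mathcomp Require Import classical_sets reals.
From mathcomp Require Import complex.
From mathcomp Require Import ring lra.
Set Implicit Arguments. Unset Strict Implicit. Unset Printing Implicit Defensive.
Import Order.TTheory GRing.Theory Num.Theory.
Local Open Scope ring_scope.
Local Open Scope complex_scope.

Local Notation Re := complex.Re.
Local Notation Im := complex.Im.

Section ComplexFacts.
Variable R : rcfType.
Implicit Types (t : R) (z w : R[i]).

Lemma ReD z w : Re (z + w) = Re z + Re w. Proof. by case: z; case: w. Qed.
Lemma ReN z : Re (- z) = - Re z. Proof. by case: z. Qed.
Lemma ImD z w : Im (z + w) = Im z + Im w. Proof. by case: z; case: w. Qed.
Lemma ImN z : Im (- z) = - Im z. Proof. by case: z. Qed.
Lemma ReMr t z : Re (t%:C * z) = t * Re z. Proof. by case: z => a b; simpc. Qed.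
Lemma ImMr t z : Im (t%:C * z) = t * Im z. Proof. by case: z => a b; simpc. Qed.
Lemma ReJ z : Re (conjc z) = Re z. Proof. by case: z. Qed.
Lemma Re_conji_mul z : Re (conjc 'i * z) = Im z. Proof. by case: z => a b; simpc. Qed.

Lemma Im_eq0_conj z : conjc z = z -> Im z = 0.
Proof. by case: z => a b /= [] ?; lra. Qed.

Lemma ge0_Re z : 0 <= z -> 0 <= Re z.
Proof. by rewrite lecE => /andP[]. Qed.

Lemma ge0_complexRe z : 0 <= z -> z = (Re z)%:C.
Proof. by case: z => a b; rewrite lecE /= => /andP[/eqP ->]. Qed.

Lemma conjc_half : conjc (2^-1 : R[i]) = 2^-1.
Proof. by rewrite conjc_inv conjc_nat. Qed.

Lemma conjc_halfi : conjc ((2 * 'i)^-1 : R[i]) = - (2 * 'i)^-1.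
Proof.
rewrite conjc_inv -invrN; congr (_^-1).
by apply/eqP; rewrite eq_complex /= !(mulr0, addr0, mul0r, subr0, oppr0) !eqxx.
Qed.

Lemma mulc_iJ : 'i * conjc 'i = 1 :> R[i].
Proof.
by apply/eqP; rewrite eq_complex /= !(mulr0, mul0r, subr0, add0r, mulrN1, opprK, oppr0) !eqxx.
Qed.

End ComplexFacts.

Lemma sqrtr_le_sqr (R : rcfType) (a o : R) : 0 <= o ->
  (Num.sqrt a <= o) = (a <= o ^+ 2).
Proof. by move=> o0; rewrite -[in RHS]ler_sqrt ?exprn_ge0 // sqrtr_sqr ger0_norm. Qed.

Section LinearFacts.
Variables (K : pzRingType) (U W : lmodType K) (f : U -> W).
Hypothesis f_lin : linear f.

Let fL : {linear U -> W} := HB.pack f (GRing.isLinear.Build K U W *:%R f f_lin).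

Lemma lin0 : f 0 = 0. Proof. exact: (linear0 fL). Qed.
Lemma linZ a x : f (a *: x) = a *: f x. Proof. exact: (linearZ_LR fL). Qed.
Lemma linD x y : f (x + y) = f x + f y. Proof. exact: (linearD fL). Qed.
Lemma linB x y : f (x - y) = f x - f y. Proof. exact: (linearB fL). Qed.

End LinearFacts.

Definition sqnorm (R : realType) (V : lmodType R[i]) (ip : V -> V -> R[i]) (x : V) : R :=
  Re (ip x x).

Definition selfadjoint (R : realType) (V : lmodType R[i]) (ip : V -> V -> R[i])
    (C : V -> V) : Prop :=
  forall x y, ip (C x) y = ip x (C y).

Section InnerProduct.
Variables (R : realType) (V : lmodType R[i]) (ip : V -> V -> R[i]).
Hypothesis hip : is_inner_product ip.
Local Notation sqnorm := (sqnorm ip).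

Lemma ipDZl a x y z : ip (a *: x + y) z = a * ip x z + ip y z. Proof. by case: hip. Qed.
Lemma ip_conj x y : ip y x = conjc (ip x y). Proof. by case: hip. Qed.
Lemma ip_ge0 x : 0 <= ip x x. Proof. by case: hip. Qed.
Lemma ip_eq0 x : ip x x = 0 -> x = 0. Proof. by case: hip => _ _ _; apply. Qed.

Lemma ip0l z : ip 0 z = 0.
Proof. by have := ipDZl (-1) 0 0 z; rewrite scaler0 addr0 mulN1r addNr. Qed.
Lemma ipZl a x z : ip (a *: x) z = a * ip x z.
Proof. by have := ipDZl a x 0 z; rewrite addr0 ip0l addr0. Qed.
Lemma ipDl x y z : ip (x + y) z = ip x z + ip y z.
Proof. by have := ipDZl 1 x y z; rewrite scale1r mul1r. Qed.
Lemma ipBl x y z : ip (x - y) z = ip x z - ip y z.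
Proof. by rewrite ipDl -scaleN1r ipZl mulN1r. Qed.
Lemma ipZr a x y : ip x (a *: y) = conjc a * ip x y.
Proof. by rewrite ip_conj ipZl rmorphM /= -ip_conj. Qed.
Lemma ipDr x y z : ip x (y + z) = ip x y + ip x z.
Proof. by rewrite ip_conj ipDl rmorphD /= -!ip_conj. Qed.
Lemma ipBr x y z : ip x (y - z) = ip x y - ip x z.
Proof. by rewrite ip_conj ipBl rmorphB /= -!ip_conj. Qed.

Lemma ip_sym_Im_eq0 x y : ip x y = ip y x -> Im (ip x y) = 0.
Proof. by move=> e; apply: Im_eq0_conj; rewrite -ip_conj. Qed.

Lemma Re_ipC x y : Re (ip y x) = Re (ip x y).
Proof. by rewrite ip_conj ReJ. Qed.

Lemma ipnormE x : ipnorm ip x = Num.sqrt (sqnorm x). Proof. by []. Qed.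
Lemma ip_xx x : ip x x = (sqnorm x)%:C. Proof. exact/ge0_complexRe/ip_ge0. Qed.
Lemma sqnorm_ge0 x : 0 <= sqnorm x. Proof. exact/ge0_Re/ip_ge0. Qed.
Lemma sqnorm_eq0 x : sqnorm x = 0 -> x = 0.
Proof. by move=> x0; apply: ip_eq0; rewrite ip_xx x0. Qed.
Lemma sqnorm0 : sqnorm 0 = 0. Proof. by rewrite /sqnorm ip0l. Qed.

Lemma sqnormD x y : sqnorm (x + y) = sqnorm x + sqnorm y + 2 * Re (ip x y).
Proof. by rewrite /sqnorm !(ipDl, ipDr) !ReD Re_ipC; ring. Qed.
Lemma sqnormB x y : sqnorm (x - y) = sqnorm x + sqnorm y - 2 * Re (ip x y).
Proof. by rewrite /sqnorm !(ipBl, ipBr) !(ReD, ReN) Re_ipC; ring. Qed.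
Lemma sqnormZ_real t x : sqnorm (t%:C *: x) = t ^+ 2 * sqnorm x.
Proof. by rewrite /sqnorm ipZl ipZr conjc_real mulrA -rmorphM ReMr expr2. Qed.
Lemma sqnormZi x : sqnorm ('i *: x) = sqnorm x.
Proof. by rewrite /sqnorm ipZl ipZr mulrA mulc_iJ mul1r. Qed.

Lemma sqnormB_le x y : sqnorm (x - y) <= 2 * sqnorm x + 2 * sqnorm y.
Proof. by have := sqnorm_ge0 (x + y); rewrite sqnormB sqnormD; lra. Qed.

Lemma Re_ip_le t x y : 2 * t * Re (ip x y) <= t ^+ 2 * sqnorm x + sqnorm y.
Proof. by have := sqnorm_ge0 (t%:C *: x - y); rewrite sqnormB sqnormZ_real ipZl ReMr; lra. Qed.

Lemma Re_ip_le_bound (T : V -> V) (c : R) : 0 <= c ->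
  (forall x, sqnorm (T x) <= c ^+ 2 * sqnorm x) ->
  forall x, Re (ip (T x) x) <= c * sqnorm x.
Proof.
move=> c_ge0 T_bd x; have [c0|c_neq0] := eqVneq c 0.
  have := T_bd x; rewrite c0 expr2 !mul0r => Tx_le0.
  suff -> : T x = 0 by rewrite ip0l.
  by apply: sqnorm_eq0; apply/eqP; rewrite eq_le Tx_le0 sqnorm_ge0.
have c_gt0 : 0 < c by rewrite lt_def c_neq0.
have le1 := Re_ip_le c^-1 (T x) x.
have le2 : c^-1 ^+ 2 * sqnorm (T x) <= sqnorm x.
  rewrite -(ler_pM2l (exprn_gt0 2 c_gt0)) mulrA -exprMn mulfV // expr1n mul1r.
  exact: T_bd.
have : c^-1 * Re (ip (T x) x) <= sqnorm x by lra.
by move/(ler_wpM2l (ltW c_gt0)); rewrite mulrA mulfV // mul1r.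
Qed.

Lemma sqnorm_le_of_ipnorm_le (T : V -> V) (M : R) :
  (forall x, ipnorm ip (T x) <= M * ipnorm ip x) ->
  forall x, sqnorm (T x) <= M ^+ 2 * sqnorm x.
Proof.
move=> T_bd x; have := T_bd x; rewrite !ipnormE => le_sqrt.
rewrite -[sqnorm (T x)](sqr_sqrtr (sqnorm_ge0 _)) -[sqnorm x](sqr_sqrtr (sqnorm_ge0 _)).
rewrite -exprMn; apply: lerXn2r => //; rewrite nnegrE ?sqrtr_ge0 //.
exact: le_trans (sqrtr_ge0 _) le_sqrt.
Qed.

End InnerProduct.

Section Cartesian.
Variables (R : realType) (V : lmodType R[i]) (ip : V -> V -> R[i]).
Hypothesis hip : is_inner_product ip.
Variables (S Ss : V -> V).
Hypothesis S_adj : is_adjoint ip S Ss.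
Local Notation A := (re_part S Ss).
Local Notation C := (im_part S Ss).

Lemma adjoint_ipl x y : ip (Ss x) y = ip x (S y).
Proof. by rewrite (ip_conj hip) -S_adj -(ip_conj hip). Qed.

Lemma adjoint_linear : linear Ss.
Proof.
move=> a x y; apply/eqP; rewrite -subr_eq0; apply/eqP/(ip_eq0 hip).
by rewrite (ipBr hip) (ipDr hip) (ipZr hip) -!S_adj (ipDr hip) (ipZr hip) subrr.
Qed.

Lemma re_im_partE x : S x = A x + 'i *: C x.
Proof.
have i_neq0 : 'i != 0 :> R[i] by rewrite eq_complex /= oner_eq0 andbF.
rewrite /re_part /im_part scalerA invfM mulrCA mulfV // mulr1.
rewrite -scalerDr addrACA subrr addr0 -[in RHS](scale1r (S x)) -scalerDl.
by rewrite scalerA mulVf ?scale1r // pnatr_eq0.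
Qed.

Lemma re_part_selfadjoint : selfadjoint ip A.
Proof.
move=> x y; rewrite /re_part (ipZl hip) (ipZr hip) conjc_half.
by rewrite (ipDl hip) (ipDr hip) S_adj adjoint_ipl addrC.
Qed.

Lemma im_part_selfadjoint : selfadjoint ip C.
Proof.
move=> x y; rewrite /im_part (ipZl hip) (ipZr hip) conjc_halfi.
by rewrite (ipBl hip) (ipBr hip) S_adj adjoint_ipl mulNr -mulrN opprB.
Qed.

Hypothesis S_lin : linear S.

Lemma re_part_linear : linear A.
Proof.
move=> a x y; rewrite /re_part S_lin adjoint_linear !scalerDr !scalerA mulrC -!scalerA.
by rewrite -!addrA; congr (_ + _); rewrite addrCA.
Qed.

Lemma im_part_linear : linear C.
Proof.
move=> a x y; rewrite /im_part S_lin adjoint_linear !scalerBr !scalerDr !scalerA mulrC -!scalerA.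
by rewrite opprD !addrA; congr (_ + _); rewrite -!addrA; congr (_ + _); rewrite addrC.
Qed.

Hypothesis S_normal : forall x, S (Ss x) = Ss (S x).

Lemma re_im_part_comm x : A (C x) = C (A x).
Proof.
rewrite /re_part /im_part !(linZ S_lin, linZ adjoint_linear).
rewrite (linB S_lin) (linB adjoint_linear) (linD S_lin) (linD adjoint_linear) S_normal.
by rewrite -!scalerDr -!scalerBr !scalerA mulrC addrA subrK opprD addrA addrK.
Qed.

(* The cross term Re <A x, i (C - r) x> = Im <A x, (C - r) x> vanishes because
   A and C are commuting self-adjoint operators. *)
Lemma sqnorm_normal_shift (r : R) x :
  sqnorm ip (S x - ('i * r%:C) *: x) = sqnorm ip (A x) + sqnorm ip (C x - r%:C *: x).
Proof.
rewrite {1}re_im_partE -addrA -scalerA -scalerBr (sqnormD hip (A x)) (sqnormZi hip).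
rewrite (ipZr hip) Re_conji_mul (ipBr hip) (ipZr hip r%:C) conjc_real ImD ImN ImMr.
have AC_real : Im (ip (A x) (C x)) = 0.
  by apply: (ip_sym_Im_eq0 hip); rewrite im_part_selfadjoint -re_im_part_comm re_part_selfadjoint.
have A_real : Im (ip (A x) x) = 0.
  by apply: (ip_sym_Im_eq0 hip); rewrite re_part_selfadjoint.
by rewrite AC_real A_real mulr0 subr0 mulr0 addr0.
Qed.

Lemma sqnorm_re_im_part x : sqnorm ip (S x) = sqnorm ip (A x) + sqnorm ip (C x).
Proof. by have := sqnorm_normal_shift 0 x; rewrite mulr0 !scale0r !subr0. Qed.

End Cartesian.

Section PositiveOp.
Variables (R : realType) (V : lmodType R[i]) (ip : V -> V -> R[i]).
Hypothesis hip : is_inner_product ip.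
Variables (C : V -> V) (c : R).
Hypotheses (C_lin : linear C) (C_sa : selfadjoint ip C) (C_pos : positive_op ip C).
Hypotheses (c_ge0 : 0 <= c) (C_bd : forall x, sqnorm ip (C x) <= c ^+ 2 * sqnorm ip x).

(* C^2 <= c C: expand <C u, u> >= 0 for u = c x - C x and use <C y, y> <= c |y|^2. *)
Lemma sqnorm_le_Re_ip x : sqnorm ip (C x) <= c * Re (ip (C x) x).
Proof.
have [c0|c_neq0] := eqVneq c 0.
  by have := C_bd x; rewrite c0 expr2 !mul0r.
have c_gt0 : 0 < c by rewrite lt_def c_neq0.
have CC_le := Re_ip_le_bound hip c_ge0 C_bd (C x).
have := ge0_Re (C_pos (c%:C *: x - C x)).
rewrite (linB C_lin) (linZ C_lin) (ipBl hip) !(ipBr hip) !(ipZl hip) !(ipZr hip).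
rewrite conjc_real (C_sa (C x) x) !(ReD, ReN, ReMr) -/(sqnorm ip (C x)) => u_pos.
suff : 0 <= c * (c * Re (ip (C x) x) - sqnorm ip (C x)) by rewrite pmulr_rge0 // subr_ge0.
by nra.
Qed.

Lemma sqnorm_sub_half_le x :
  sqnorm ip (C x - (c / 2)%:C *: x) <= (c / 2) ^+ 2 * sqnorm ip x.
Proof.
rewrite (sqnormB hip) (sqnormZ_real hip) (ipZr hip) conjc_real ReMr.
by have := sqnorm_le_Re_ip x; nra.
Qed.

End PositiveOp.

Section OpNorm.
Variables (R : realType) (V : lmodType R[i]) (ip : V -> V -> R[i]).
Hypothesis hip : is_inner_product ip.
Variable T : V -> V.

Lemma ipnorm_le1 x : (ipnorm ip x <= 1) = (sqnorm ip x <= 1).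
Proof. by rewrite ipnormE sqrtr_le_sqr ?ler01 // expr1n. Qed.

Lemma opnorm_le_of_sqnorm (K : R) : 0 <= K ->
  (forall x, sqnorm ip (T x) <= K ^+ 2 * sqnorm ip x) -> opnorm ip T <= K.
Proof.
move=> K_ge0 T_bd; apply: ge_sup.
  by exists (ipnorm ip (T 0)), 0; rewrite //= ipnorm_le1 (sqnorm0 hip) ler01.
move=> _ [x /= + <-]; rewrite ipnorm_le1 => x_le1.
rewrite ipnormE sqrtr_le_sqr //; apply: le_trans (T_bd x) _.
by rewrite ler_piMr ?exprn_ge0.
Qed.

Variable M : R.
Hypotheses (T_lin : linear T) (T_bd : forall x, sqnorm ip (T x) <= M * sqnorm ip x).

Let image_unit_ball := [set ipnorm ip (T x) | x in [set x | ipnorm ip x <= 1]]%classic.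

Let image_unit_ball_T0 : image_unit_ball (ipnorm ip (T 0)).
Proof. by exists 0; rewrite //= ipnorm_le1 (sqnorm0 hip) ler01. Qed.

Lemma has_sup_image_unit_ball : has_sup image_unit_ball.
Proof.
split; first by exists (ipnorm ip (T 0)).
exists (Num.sqrt `|M|) => _ [x /= + <-]; rewrite ipnorm_le1 => x_le1.
rewrite ipnormE ler_sqrt ?normr_ge0 //; apply: le_trans (T_bd x) _.
apply: le_trans (ler_wpM2r (sqnorm_ge0 hip x) (ler_norm M)) _.
by rewrite ler_piMr ?normr_ge0.
Qed.

Lemma opnorm_ge0 : 0 <= opnorm ip T.
Proof.
exact: le_trans (sqrtr_ge0 _) (sup_upper_bound has_sup_image_unit_ball image_unit_ball_T0).
Qed.

Lemma sqnorm_le_opnorm x : sqnorm ip (T x) <= opnorm ip T ^+ 2 * sqnorm ip x.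
Proof.
have [x0|x_neq0] := eqVneq (sqnorm ip x) 0.
  by rewrite (sqnorm_eq0 hip x0) (lin0 T_lin) (sqnorm0 hip) mulr0.
have x_gt0 : 0 < sqnorm ip x by rewrite lt_def x_neq0 sqnorm_ge0.
set n := Num.sqrt (sqnorm ip x).
have n_gt0 : 0 < n by rewrite sqrtr_gt0.
have n2 : n ^+ 2 = sqnorm ip x by rewrite sqr_sqrtr // ltW.
have y_in : image_unit_ball (ipnorm ip (T (n^-1%:C *: x))).
  by exists (n^-1%:C *: x); rewrite //= ipnorm_le1 (sqnormZ_real hip) exprVn n2 mulVf.
have := sup_upper_bound has_sup_image_unit_ball y_in.
rewrite ipnormE (linZ T_lin) (sqnormZ_real hip) sqrtr_le_sqr ?opnorm_ge0 // exprVn n2.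
by move/(ler_wpM2l (ltW x_gt0)); rewrite mulrA mulfV ?mul1r // mulrC.
Qed.

End OpNorm.

Section Commutator.
Variables (R : realType) (V : lmodType R[i]) (ip : V -> V -> R[i]).
Hypothesis hip : is_inner_product ip.
Variables (P Q : V -> V) (p q : R[i]) (s t : R).
Hypotheses (P_lin : linear P) (Q_lin : linear Q) (s_ge0 : 0 <= s) (t_ge0 : 0 <= t).
Hypotheses (P_bd : forall x, sqnorm ip (P x - p *: x) <= s * sqnorm ip x)
           (Q_bd : forall x, sqnorm ip (Q x - q *: x) <= t * sqnorm ip x).

Lemma commutator_shift x : P (Q x) - Q (P x) =
  (P (Q x - q *: x) - p *: (Q x - q *: x)) - (Q (P x - p *: x) - q *: (P x - p *: x)).
Proof.
have cross_terms_cancel (a b u v w : V) : a - u - (v - w) - (b - v - (u - w)) = a - b.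
  by rewrite !opprD !opprK !addrA (ACl (1*5*(2*7)*(3*6)*(4*8)))/= !addNr subrr !addr0.
rewrite !(linB P_lin, linB Q_lin, linZ P_lin, linZ Q_lin) !scalerBr !scalerA (mulrC q p).
by rewrite cross_terms_cancel.
Qed.

Lemma sqnorm_commutator_le x : sqnorm ip (P (Q x) - Q (P x)) <= 4 * s * t * sqnorm ip x.
Proof.
rewrite commutator_shift; apply: le_trans (sqnormB_le hip _ _) _.
have := P_bd (Q x - q *: x); have := Q_bd (P x - p *: x).
have := ler_wpM2l s_ge0 (Q_bd x); have := ler_wpM2l t_ge0 (P_bd x).
by have := sqnorm_ge0 hip x; nra.
Qed.

End Commutator.

Section NormalShift.
Variables (R : realType) (V : lmodType R[i]) (ip : V -> V -> R[i]).
Hypothesis hip : is_inner_product ip.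
Variables (S Ss : V -> V) (M : R).
Hypotheses (S_lin : linear S) (S_adj : is_adjoint ip S Ss).
Hypotheses (S_normal : forall x, S (Ss x) = Ss (S x)).
Hypotheses (S_bd : forall x, ipnorm ip (S x) <= M * ipnorm ip x).
Hypothesis C_pos : positive_op ip (im_part S Ss).
Local Notation A := (re_part S Ss).
Local Notation C := (im_part S Ss).

Let A_bd x : sqnorm ip (A x) <= M ^+ 2 * sqnorm ip x.
Proof.
apply: le_trans (sqnorm_le_of_ipnorm_le hip S_bd x).
by rewrite (sqnorm_re_im_part hip S_adj S_lin S_normal) lerDl sqnorm_ge0.
Qed.

Let C_bd x : sqnorm ip (C x) <= M ^+ 2 * sqnorm ip x.
Proof.
apply: le_trans (sqnorm_le_of_ipnorm_le hip S_bd x).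
by rewrite (sqnorm_re_im_part hip S_adj S_lin S_normal) lerDr sqnorm_ge0.
Qed.

Lemma sqnorm_normal_shift_le x :
  sqnorm ip (S x - ('i * (opnorm ip C / 2)%:C) *: x)
  <= (opnorm ip A ^+ 2 + (opnorm ip C / 2) ^+ 2) * sqnorm ip x.
Proof.
have A_lin := re_part_linear hip S_adj S_lin.
have C_lin := im_part_linear hip S_adj S_lin.
rewrite (sqnorm_normal_shift hip S_adj S_lin S_normal) mulrDl lerD //.
  exact: (sqnorm_le_opnorm hip A_lin A_bd).
exact: (sqnorm_sub_half_le hip C_lin (im_part_selfadjoint hip S_adj) C_pos
         (opnorm_ge0 hip C_bd) (sqnorm_le_opnorm hip C_lin C_bd)).
Qed.

End NormalShift.

Lemma sqr_half_sqrt_mul (R : rcfType) (a b c d : R) :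
  (2^-1 * Num.sqrt (4 * a ^+ 2 + c ^+ 2) * Num.sqrt (4 * b ^+ 2 + d ^+ 2)) ^+ 2
  = 4 * (a ^+ 2 + (c / 2) ^+ 2) * (b ^+ 2 + (d / 2) ^+ 2).
Proof.
have sq_ge0 (u v : R) : 0 <= 4 * u ^+ 2 + v ^+ 2 by nra.
by rewrite !exprMn !sqr_sqrtr ?sq_ge0 //; field.
Qed.

Theorem mainTheorem2 (R : realType) (V : lmodType R[i]) (ip : V -> V -> R[i])
  (hH : separable_hilbert ip)
  (S Ss T Ts : V -> V)
  (hS : bounded_op ip S) (hT : bounded_op ip T)
  (hSs : is_adjoint ip S Ss) (hTs : is_adjoint ip T Ts)
  (nS : forall x, S (Ss x) = Ss (S x)) (nT : forall x, T (Ts x) = Ts (T x))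
  (hC : positive_op ip (im_part S Ss)) (hD : positive_op ip (im_part T Ts)) :
  let A := re_part S Ss in let C := im_part S Ss in
  let B := re_part T Ts in let D := im_part T Ts in
  opnorm ip (fun x => S (T x) - T (S x))
  <= 2^-1 * Num.sqrt (4 * opnorm ip A ^+ 2 + opnorm ip C ^+ 2)
          * Num.sqrt (4 * opnorm ip B ^+ 2 + opnorm ip D ^+ 2).
Proof.
cbv zeta; case: hH => hip _ _.
case: hS => S_lin [MS S_bd]; case: hT => T_lin [MT T_bd].
have sq_ge0 (u v : R) : 0 <= u ^+ 2 + v ^+ 2 by nra.
apply: (opnorm_le_of_sqnorm hip) => [|x].
  by rewrite !mulr_ge0 ?sqrtr_ge0 ?invr_ge0 ?ler0n.
rewrite sqr_half_sqrt_mul.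
exact: (sqnorm_commutator_le hip S_lin T_lin (sq_ge0 _ _) (sq_ge0 _ _)
  (sqnorm_normal_shift_le hip S_lin hSs nS S_bd hC)
  (sqnorm_normal_shift_le hip T_lin hTs nT T_bd hD)).
Qed.
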